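(* Let $B$ be an integral $n\times n$ matrix with $B_{ij}\ge0$ and $B_{ii}>0$ for all $1\le i,j\le n$, and let $k$ be a field. Then there exist a finite dimensional triangular $k$-algebra $A$ (with respect to primitive orthogonal idempotents $e_1,\dots,e_n$) and a triangular $A$-$A$-bimodule $M$ such that $C_A=B_+$ and $C_M=B_-$. In particular $B=C_\Lambda$ for $\Lambda=A\ltimes DM$.
   Context: $A$ is triangular if $e_iAe_j=0$ for $j<i$ and $e_iAe_i\cong k$; a bimodule $M$ is triangular if $e_iMe_j=0$ for $j<i$. $DM=\operatorname{Hom}_k(M,k)$ and $\Lambda=A\ltimes DM$ is $A\oplus DM$ with $(a,\mu)(a',\mu')=(aa',a\mu'+\mu a')$, with idempotents $(e_i,0)$. Cartan matrices: $(C_A)_{ij}=\dim_ke_{n+1-j}Ae_{n+1-i}$, $(C_M)_{ij}=\dim_ke_{n+1-j}Me_{n+1-i}$, $(C_\Lambda)_{ij}=\dim_ke_{n+1-j}\Lambda e_{n+1-i}$. For a square matrix $B$: $(B_+)_{ij}=B_{ij}$ if $i<j$, $1$ if $i=j$, $0$ otherwise; $(B_-)_{ij}=B_{ji}$ if $i<j$, $B_{ii}-1$ if $i=j$, $0$ otherwise (so $B=B_++B_-^T$). *)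

From HB Require Import structures.
From mathcomp Require Import all_boot all_order all_algebra all_field.
Set Implicit Arguments. Unset Strict Implicit. Unset Printing Implicit Defensive.
Import Order.TTheory GRing.Theory Num.Theory.
Local Open Scope ring_scope.

(* A "fixed" span-of-image subspace: { f v | v in V } as a subspace,
   computed as the span of the images of a basis (f will always be linear). *)
Definition img_vs (K : fieldType) (U W : vectType K) (f : U -> W) : {vspace W} :=
  (<< map f (vbasis (fullv : {vspace U})) >>)%VS.

Definition cornerA (K : fieldType) (A : falgType K) (e e' : A) : {vspace A} :=
  img_vs (fun a : A => e * a * e').

Definition primitive_idem (K : fieldType) (A : falgType K) (e : A) : Prop :=
  [/\ e * e = e, e != 0 &
      forall f g : A, f * f = f -> g * g = g -> f * g = 0 -> g * f = 0 ->
        e = f + g -> f = 0 \/ g = 0].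

Definition complete_prim_orth_idem (K : fieldType) (A : falgType K) (n : nat)
    (e : 'I_n -> A) : Prop :=
  [/\ forall i, primitive_idem (e i),
      forall i j, i != j -> e i * e j = 0 &
      \sum_(i < n) e i = 1].

Definition triangular_alg (K : fieldType) (A : falgType K) (n : nat)
    (e : 'I_n -> A) : Prop :=
  (forall i j : 'I_n, (j < i)%N -> cornerA (e i) (e j) = 0%VS) /\
  (forall i : 'I_n, \dim (cornerA (e i) (e i)) = 1%N).

Record bimod_ax (K : fieldType) (A : falgType K) (M : vectType K)
    (la : A -> M -> M) (ra : M -> A -> M) : Prop := BimodAx {
  la_addl : forall a b m, la (a + b) m = la a m + la b m;
  la_addr : forall a m m', la a (m + m') = la a m + la a m';
  la_scalel : forall (c : K) a m, la (c *: a) m = c *: la a m;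
  la_scaler : forall (c : K) a m, la a (c *: m) = c *: la a m;
  la_one : forall m, la 1 m = m;
  la_mul : forall a b m, la (a * b) m = la a (la b m);
  ra_addl : forall m m' a, ra (m + m') a = ra m a + ra m' a;
  ra_addr : forall m a b, ra m (a + b) = ra m a + ra m b;
  ra_scalel : forall (c : K) m a, ra (c *: m) a = c *: ra m a;
  ra_scaler : forall (c : K) m a, ra m (c *: a) = c *: ra m a;
  ra_one : forall m, ra m 1 = m;
  ra_mul : forall m a b, ra m (a * b) = ra (ra m a) b;
  lr_comm : forall a m b, la a (ra m b) = ra (la a m) b
}.

Definition cornerM (K : fieldType) (A : falgType K) (M : vectType K)
    (la : A -> M -> M) (ra : M -> A -> M) (e e' : A) : {vspace M} :=
  img_vs (fun m : M => la e (ra m e')).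

Definition triangular_bimod (K : fieldType) (A : falgType K) (M : vectType K)
    (la : A -> M -> M) (ra : M -> A -> M) (n : nat) (e : 'I_n -> A) : Prop :=
  forall i j : 'I_n, (j < i)%N -> cornerM la ra (e i) (e j) = 0%VS.

(* Cartan matrices, indices shifted to 0..n-1: entry (i,j) is
   dim e_{n-1-j} X e_{n-1-i}  (i.e. rev_ord). *)
Definition cartanA (K : fieldType) (A : falgType K) (n : nat) (e : 'I_n -> A)
    : 'M[int]_n :=
  \matrix_(i < n, j < n) (\dim (cornerA (e (rev_ord j)) (e (rev_ord i))))%:Z.

Definition cartanM (K : fieldType) (A : falgType K) (M : vectType K)
    (la : A -> M -> M) (ra : M -> A -> M) (n : nat) (e : 'I_n -> A)
    : 'M[int]_n :=
  \matrix_(i < n, j < n)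
     (\dim (cornerM la ra (e (rev_ord j)) (e (rev_ord i))))%:Z.

Definition Bplus (n : nat) (B : 'M[int]_n) : 'M[int]_n :=
  \matrix_(i < n, j < n)
    (if (i < j)%N then B i j else if i == j then 1 else 0).

Definition Bminus (n : nat) (B : 'M[int]_n) : 'M[int]_n :=
  \matrix_(i < n, j < n)
    (if (i < j)%N then B j i else if i == j then B i i - 1 else 0).

(* Trivial extension Lambda = A |x DM, DM = Hom_k(M, k), as the k-vector space
   A * 'Hom(M, k^o) with multiplication
   (a, mu)(a', mu') = (a a', a mu' + mu a'), where
   (a mu')(m) = mu'(m a) and (mu a')(m) = mu(a' m). *)
Section TrivExt.
Variables (K : fieldType) (A : falgType K) (M : vectType K)
  (la : A -> M -> M) (ra : M -> A -> M).

Definition DM := 'Hom(M, K^o).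
Definition Lam := (A * DM)%type.

Definition lact_dual (a : A) (mu : DM) : DM := linfun (fun m : M => mu (ra m a)).
Definition ract_dual (mu : DM) (a : A) : DM := linfun (fun m : M => mu (la a m)).

Definition lam_mul (x y : Lam) : Lam :=
  (x.1 * y.1, lact_dual x.1 y.2 + ract_dual x.2 y.1).

Definition lam_idem (e : A) : Lam := (e, 0).

Definition cornerL (e e' : A) : {vspace Lam} :=
  img_vs (fun x : Lam => lam_mul (lam_mul (lam_idem e) x) (lam_idem e')).

Definition cartanL (n : nat) (e : 'I_n -> A) : 'M[int]_n :=
  \matrix_(i < n, j < n) (\dim (cornerL (e (rev_ord j)) (e (rev_ord i))))%:Z.
End TrivExt.

(* Take for A the path algebra, modulo paths of length two, of a quiver on the
   vertices 1..n with no arrows against the order, and for M a bimodule with a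
   basis of vectors each lying in a single corner e_p M e_q.  Every corner of A,
   of M and of Lambda = A x DM then has a basis of coordinate vectors, so its
   dimension counts vertices and arrows; choosing the numbers of arrows from the
   entries of B_+ and B_- realizes both Cartan matrices, and since
   e_p DM e_q = D(e_q M e_p) the Cartan matrix of Lambda is B_+ + B_-^T = B. *)

From HB Require Import structures.
From mathcomp Require Import all_boot all_order all_algebra all_field.
From mathcomp Require Import ring zify.
Set Implicit Arguments. Unset Strict Implicit. Unset Printing Implicit Defensive.
Import GRing.Theory Num.Theory.
Local Open Scope ring_scope.

Lemma linfun_linearE (K : fieldType) (U W : vectType K) (f : U -> W) :
  linear f -> linfun f =1 f.
Proof.
by move=> f_lin; exact: (lfunE (HB.pack f (GRing.isLinear.Build K U W *:%R f f_lin))).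
Qed.

Section CoordinateProjection.
Variables (K : fieldType) (V : vectType K) (I : finType).
Variables (b : I -> V) (c : I -> V -> K) (S : pred I) (f : V -> V).
Hypotheses (c_b : forall k l, c k (b l) = (k == l)%:R)
  (c_linear : forall k, linear (c k : V -> K^o))
  (fE : forall v, f v = \sum_(k | S k) c k v *: b k).

Lemma coord_proj_linear : linear f.
Proof.
move=> a u v; rewrite !fE scaler_sumr -big_split /=; apply: eq_bigr => k _.
by rewrite (c_linear k a u v) scalerDl scalerA.
Qed.

Lemma coord_proj_id k : S k -> f (b k) = b k.
Proof.
move=> Sk; rewrite fE (bigD1 k) //= c_b eqxx scale1r big1 ?addr0 // => l /andP[_ lk].
by rewrite c_b (negbTE lk) scale0r.
Qed.

Lemma img_vs_coord_proj : img_vs f = <<[seq b k | k <- enum S]>>%VS.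
Proof.
have img_f : img_vs f = (linfun f @: fullv)%VS.
  rewrite /img_vs -[in RHS](span_basis (vbasisP fullv)) limg_span.
  by apply: eq_span => v; rewrite (eq_map (linfun_linearE coord_proj_linear)).
apply/eqP; rewrite eqEsubv img_f; apply/andP; split.
  apply/subvP => _ /memv_imgP[v _ ->]; rewrite linfun_linearE ?fE.
    apply: memv_suml => k Sk; apply/memvZ/memv_span/map_f.
    by rewrite mem_enum.
  exact: coord_proj_linear.
apply/span_subvP => y /mapP[k]; rewrite mem_enum => Sk ->.
rewrite -(coord_proj_id Sk) -(linfun_linearE coord_proj_linear).
exact: memv_img (memvf _).
Qed.

Lemma dim_img_vs_coord_proj : \dim (img_vs f) = #|S|.
Proof.
pose X := [tuple b (enum_val (A := S) i) | i < #|S|].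
have -> : img_vs f = <<X>>%VS.
  rewrite img_vs_coord_proj; apply: eq_span => y; apply/mapP/mapP.
    case=> k; rewrite mem_enum => Sk ->; exists (enum_rank_in Sk k).
      exact: mem_enum.
    by rewrite enum_rankK_in.
  by case=> i _ ->; exists (enum_val i); rewrite ?mem_enum ?enum_valP.
suff /eqP-> : free X by rewrite size_tuple.
apply/freeP => co co_X j.
have Xi (i : 'I_#|S|) : X`_i = b (enum_val i) by rewrite -tnth_nth tnth_mktuple.
have := congr1 (c (enum_val j)) co_X.
pose cj : {linear V -> K^o} := HB.pack (c (enum_val j))
  (GRing.isLinear.Build K V K^o *:%R _ (c_linear (enum_val j))).
rewrite -[c _]/(cj : V -> K^o) linear0 linear_sum (bigD1 j) // big1 ?addr0.
  by rewrite linearZ Xi /= c_b eqxx addr0 => <-; exact: (esym (mulr1 _)).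
move=> i ij; rewrite linearZ Xi /= c_b (inj_eq enum_val_inj) eq_sym (negbTE ij).
exact: mulr0.
Qed.
End CoordinateProjection.

Lemma scale_regularE (K : fieldType) (a v : K) : a *: (v : K^o) = a * v.
Proof. by []. Qed.

Definition ffun_delta (K : fieldType) (I : finType) (k : I) : {ffun I -> K^o} :=
  [ffun l => (l == k)%:R].

Lemma ffun_restrict_sum (K : fieldType) (I : finType) (S : pred I)
    (x : {ffun I -> K^o}) :
  [ffun l => if S l then x l else 0] = \sum_(k | S k) x k *: ffun_delta K k.
Proof.
apply/ffunP => l; rewrite sum_ffunE !ffunE.
case: (boolP (S l)) => Sl.
  rewrite (bigD1 l) //= !ffunE eqxx scale_regularE mulr1 big1 ?addr0 //.
  by move=> k /andP[_ kl]; rewrite !ffunE eq_sym (negbTE kl) scale_regularE mulr0.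
rewrite big1 // => k Sk; rewrite !ffunE scale_regularE.
by case: eqP => [lk|]; [move: Sl; rewrite lk Sk | rewrite mulr0].
Qed.

Lemma card_sum_pred (I1 I2 : finType) (P : pred (I1 + I2)) :
  #|P| = (#|[pred i | P (inl i)]| + #|[pred j | P (inr j)]|)%N.
Proof. by rewrite -!sum1_card big_sumType. Qed.

Section DualActions.
Variables (K : fieldType) (A : falgType K) (M : vectType K).
Variables (la : A -> M -> M) (ra : M -> A -> M).
Hypothesis bimodM : bimod_ax la ra.

Lemma lact_dualE a (mu : DM M) m : lact_dual ra a mu m = mu (ra m a).
Proof.
rewrite linfun_linearE // => c m1 m2 /=.
by rewrite (ra_addl bimodM) (ra_scalel bimodM) linearP.
Qed.

Lemma ract_dualE (mu : DM M) a m : ract_dual la mu a m = mu (la a m).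
Proof.
rewrite linfun_linearE // => c m1 m2 /=.
by rewrite (la_addr bimodM) (la_scaler bimodM) linearP.
Qed.
End DualActions.

Lemma sum_pair (U W : nmodType) (I : finType) (P : pred I) (F : I -> U * W) :
  \sum_(i | P i) F i = (\sum_(i | P i) (F i).1, \sum_(i | P i) (F i).2).
Proof.
by apply: (big_rec3 (fun x y z => x = (y, z))) => // i x y z _ ->; case: (F i).
Qed.

Section RadicalSquareZeroAlgebra.
Variables (K : fieldType) (n : nat) (Arr : finType) (src tgt : Arr -> 'I_n.+1).

(* Coordinates on the trivial paths [inl p] and on the arrows [inr a]; the
   unused arguments let the type determine [src] and [tgt], hence its ring
   structure. *)
Definition rsz_alg of (Arr -> 'I_n.+1) & (Arr -> 'I_n.+1) :=
  {ffun 'I_n.+1 + Arr -> K^o}.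
Local Notation A := (rsz_alg src tgt).
HB.instance Definition _ := Vector.on A.

Definition rsz_mul (x y : A) : A := [ffun k =>
  match k with
  | inl p => x (inl p) * y (inl p)
  | inr a => x (inl (src a)) * y (inr a) + x (inr a) * y (inl (tgt a))
  end].
Definition rsz_one : A := [ffun k => if k is inl _ then 1 else 0].

Fact rsz_mulA : associative rsz_mul.
Proof. by move=> x y z; apply/ffunP => -[p|a]; rewrite !ffunE /=; ring. Qed.
Fact rsz_mul1l : left_id rsz_one rsz_mul.
Proof. by move=> x; apply/ffunP => -[p|a]; rewrite !ffunE /=; ring. Qed.
Fact rsz_mul1r : right_id rsz_one rsz_mul.
Proof. by move=> x; apply/ffunP => -[p|a]; rewrite !ffunE /=; ring. Qed.
Fact rsz_mulDl : left_distributive rsz_mul +%R.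
Proof. by move=> x y z; apply/ffunP => -[p|a]; rewrite !ffunE /=; ring. Qed.
Fact rsz_mulDr : right_distributive rsz_mul +%R.
Proof. by move=> x y z; apply/ffunP => -[p|a]; rewrite !ffunE /=; ring. Qed.
Fact rsz_one_neq0 : rsz_one != 0.
Proof. by apply/eqP => /ffunP/(_ (inl ord0)); rewrite !ffunE; apply/eqP/oner_neq0. Qed.

HB.instance Definition _ := GRing.Zmodule_isNzRing.Build A
  rsz_mulA rsz_mul1l rsz_mul1r rsz_mulDl rsz_mulDr rsz_one_neq0.

Fact rsz_scaleAl (c : K) (x y : A) : c *: rsz_mul x y = rsz_mul (c *: x) y.
Proof. by apply/ffunP => -[p|a]; rewrite !ffunE /= !scale_regularE; ring. Qed.
HB.instance Definition _ := GRing.Lmodule_isLalgebra.Build K A rsz_scaleAl.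
Fact rsz_scaleAr (c : K) (x y : A) : c *: rsz_mul x y = rsz_mul x (c *: y).
Proof. by apply/ffunP => -[p|a]; rewrite !ffunE /= !scale_regularE; ring. Qed.
HB.instance Definition _ := GRing.Lalgebra_isAlgebra.Build K A rsz_scaleAr.
HB.instance Definition _ := Algebra_isFalgebra.Build K A.

Lemma rsz_mulE (x y : A) : x * y = rsz_mul x y. Proof. by []. Qed.
Lemma rsz_oneE : (1 : A) = rsz_one. Proof. by []. Qed.

Definition videm (p : 'I_n.+1) : A :=
  [ffun k => if k is inl i then (i == p)%:R else 0].

Definition in_corner (p q : 'I_n.+1) (k : 'I_n.+1 + Arr) : bool :=
  match k with inl i => (i == p) && (p == q) | inr a => (src a == p) && (tgt a == q) end.

Lemma corner_coord p q (x : A) k :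
  (videm p * x * videm q) k = if in_corner p q k then x k else 0.
Proof.
case: k => [i|a]; rewrite !rsz_mulE !ffunE /=.
  by case: (eqVneq p q) => [<-|pq]; case: (eqVneq i p) => [->|ip];
    rewrite ?eqxx ?(negbTE ip) ?(negbTE pq) /=; ring.
by case: (src a == p); case: (tgt a == q); rewrite /=; ring.
Qed.

Lemma card_in_corner p q :
  #|in_corner p q| = ((p == q) + #|[pred a | (src a == p) && (tgt a == q)]|)%N.
Proof.
rewrite card_sum_pred; congr (_ + _)%N; case: (eqVneq p q) => [<-|pq].
  by rewrite (@eq_card _ _ (pred1 p)) ?card1 // => i; rewrite !inE /in_corner eqxx andbT.
by rewrite (@eq_card _ _ pred0) ?card0 // => i; rewrite !inE /in_corner (negbTE pq) andbF.
Qed.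

Lemma corner_rsz_expand p q (x : A) :
  videm p * x * videm q = \sum_(k | in_corner p q k) x k *: ffun_delta K k.
Proof. by rewrite -ffun_restrict_sum; apply/ffunP => k; rewrite corner_coord ffunE. Qed.

Lemma dim_corner_rsz p q : \dim (cornerA (videm p) (videm q)) =
  ((p == q) + #|[pred a | (src a == p) && (tgt a == q)]|)%N.
Proof.
rewrite -card_in_corner; apply: dim_img_vs_coord_proj (corner_rsz_expand p q).
- by move=> k l; rewrite ffunE.
- by move=> k c x y; rewrite !ffunE.
Qed.

Lemma videm_mul p q : videm p * videm q = if p == q then videm p else 0.
Proof.
case: (eqVneq p q) => [<-|pq]; apply/ffunP => -[i|a];
  rewrite rsz_mulE !ffunE /= ?mulr0 ?mul0r ?addr0 //.
  by case: (i == p); rewrite ?mulr1 ?mulr0.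
by case: (eqVneq i p) => [->|]; rewrite ?(negbTE pq) ?mulr0 ?mul0r.
Qed.

Lemma videm_neq0 p : videm p != 0.
Proof. by apply/eqP => /ffunP/(_ (inl p)); rewrite !ffunE eqxx; apply/eqP/oner_neq0. Qed.

Lemma sum_videm : \sum_(p < n.+1) videm p = 1.
Proof.
apply/ffunP => -[i|a]; rewrite sum_ffunE rsz_oneE !ffunE; last first.
  by rewrite big1 // => p _; rewrite ffunE.
rewrite (bigD1 i) //= ffunE eqxx big1 ?addr0 // => p pi.
by rewrite ffunE eq_sym (negbTE pi).
Qed.

Variables (Brr : finType) (lft rgt : Brr -> 'I_n.+1).

Definition diag_bimod := {ffun Brr -> K^o}.
HB.instance Definition _ := Vector.on diag_bimod.

Definition diag_lact (x : A) (m : diag_bimod) : diag_bimod :=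
  [ffun b => x (inl (lft b)) * m b].
Definition diag_ract (m : diag_bimod) (x : A) : diag_bimod :=
  [ffun b => m b * x (inl (rgt b))].

Lemma diag_bimod_ax : bimod_ax diag_lact diag_ract.
Proof.
by constructor=> *; apply/ffunP => b;
  rewrite ?rsz_mulE ?rsz_oneE !ffunE ?scale_regularE /= ?ffunE ?scale_regularE; ring.
Qed.

Lemma corner_diag_bimod_expand p q m :
  diag_lact (videm p) (diag_ract m (videm q)) =
  \sum_(b | (lft b == p) && (rgt b == q)) m b *: ffun_delta K b.
Proof.
rewrite -ffun_restrict_sum; apply/ffunP => b; rewrite !ffunE /=.
by case: (lft b == p); case: (rgt b == q); rewrite /=; ring.
Qed.

Lemma dim_corner_diag_bimod p q :
  \dim (cornerM diag_lact diag_ract (videm p) (videm q)) =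
  #|[pred b | (lft b == p) && (rgt b == q)]|.
Proof.
apply: dim_img_vs_coord_proj (corner_diag_bimod_expand p q).
- by move=> b b'; rewrite ffunE.
- by move=> b c m m'; rewrite !ffunE.
Qed.

Definition coord_functional (b : Brr) : DM diag_bimod :=
  linfun (fun m : diag_bimod => m b).

Lemma coord_functionalE b m : coord_functional b m = m b.
Proof. by rewrite linfun_linearE // => c m1 m2; rewrite !ffunE. Qed.

(* e_p DM e_q is dual to e_q M e_p, with basis the coordinate functionals. *)
Definition trivext_basis (k : 'I_n.+1 + Arr + Brr) : Lam A diag_bimod :=
  match k with inl k => (ffun_delta K k, 0) | inr b => (0, coord_functional b) end.
Definition trivext_coord (k : 'I_n.+1 + Arr + Brr) (x : Lam A diag_bimod) : K :=
  match k with inl k => x.1 k | inr b => x.2 (ffun_delta K b) end.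
Definition in_corner_trivext p q (k : 'I_n.+1 + Arr + Brr) : bool :=
  match k with inl k => in_corner p q k | inr b => (lft b == q) && (rgt b == p) end.

Lemma corner_trivext_expand p q x :
  lam_mul diag_lact diag_ract
    (lam_mul diag_lact diag_ract (lam_idem _ (videm p)) x) (lam_idem _ (videm q)) =
  \sum_(k | in_corner_trivext p q k) trivext_coord k x *: trivext_basis k.
Proof.
rewrite big_sumType !sum_pair /lam_mul /lam_idem /=; congr (_, _).
  by rewrite [X in _ + X]big1 ?addr0 ?corner_rsz_expand // => b _; apply: scaler0.
rewrite /= big1 ?add0r; last by move=> k _; apply: scaler0.
apply/lfunP => m; rewrite sum_lfunE.
have bimodM := diag_bimod_ax.
rewrite !(add_lfunE, lact_dualE bimodM, ract_dualE bimodM, zero_lfunE) add0r addr0.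
rewrite -(lr_comm bimodM) corner_diag_bimod_expand linear_sum.
apply: eq_bigr => b _.
by rewrite linearZ scale_lfunE coord_functionalE /= !scale_regularE mulrC.
Qed.

Lemma dim_corner_trivext p q :
  \dim (cornerL diag_lact diag_ract (videm p) (videm q)) =
  ((p == q) + #|[pred a | (src a == p) && (tgt a == q)]|
    + #|[pred b | (lft b == q) && (rgt b == p)]|)%N.
Proof.
rewrite -card_in_corner (dim_img_vs_coord_proj _ _ (corner_trivext_expand p q)).
- by rewrite card_sum_pred.
- case=> [k|b] [l|b'] /=; rewrite ?ffunE ?zero_lfunE //.
  by rewrite coord_functionalE ffunE eq_sym.
- by case=> [k|b] c x y /=; rewrite ?ffunE ?add_lfunE ?scale_lfunE.
Qed.

Hypothesis src_neq_tgt : forall a, src a != tgt a.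

Lemma videm_primitive p : primitive_idem (videm p).
Proof.
split; [by rewrite videm_mul eqxx | exact: videm_neq0 |].
move=> f g ff gg fg gf ef.
have f_corner : videm p * f * videm p = f.
  by rewrite ef mulrDl ff gf addr0 mulrDr ff fg addr0.
have fE : f = f (inl p) *: videm p.
  apply/ffunP => k; rewrite -{1}f_corner corner_coord !ffunE scale_regularE.
  case: k => [i|a] /=; first by case: (eqVneq i p) => [->|]; rewrite ?eqxx ?mulr1 ?mulr0.
  case: (eqVneq (src a) p) => [sp|]; last by rewrite mulr0.
  by rewrite -sp eq_sym (negbTE (src_neq_tgt a)) mulr0.
have f_idem : f (inl p) * f (inl p) = f (inl p) by rewrite -{3}ff rsz_mulE ffunE.
have : f (inl p) * (f (inl p) - 1) == 0 by rewrite mulrBr mulr1 f_idem subrr.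
rewrite mulf_eq0 subr_eq0 => /orP[/eqP f0|/eqP f1]; first by left; rewrite fE f0 scale0r.
by right; move: ef; rewrite fE f1 scale1r -{1}[videm p]addr0 => /addrI <-.
Qed.

Lemma videm_complete : complete_prim_orth_idem videm.
Proof.
split; [exact: videm_primitive | | exact: sum_videm].
by move=> p q pq; rewrite videm_mul (negbTE pq).
Qed.
End RadicalSquareZeroAlgebra.

Lemma card_tag_eq (I : finType) (T_ : I -> finType) (i : I) :
  #|[pred a : {i : I & T_ i} | tag a == i]| = #|T_ i|.
Proof.
rewrite -(card_image (@eq_from_Tagged _ T_ i)); apply: eq_card => -[j x]; rewrite !inE /=.
apply/eqP/imageP => [ji | [y _ /(congr1 tag)//]].
by subst j; exists x.
Qed.

Lemma rev_ord_ltn n (i j : 'I_n) : (rev_ord i < rev_ord j)%N = (j < i)%N.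
Proof. by have := ltn_ord i; have := ltn_ord j; rewrite /=; lia. Qed.

Section TriangularSplitting.
Variables (n : nat) (B : 'M[int]_n).

Lemma Bplus_diag (i : 'I_n) : Bplus B i i = 1.
Proof. by rewrite mxE ltnn eqxx. Qed.

Lemma Bplus_lower (i j : 'I_n) : (j < i)%N -> Bplus B i j = 0.
Proof.
by move=> ji; rewrite mxE ltnNge ltnW //; case: eqP => // ij; rewrite ij ltnn in ji.
Qed.

Lemma Bminus_lower (i j : 'I_n) : (j < i)%N -> Bminus B i j = 0.
Proof.
by move=> ji; rewrite mxE ltnNge ltnW //; case: eqP => // ij; rewrite ij ltnn in ji.
Qed.

Lemma Bplus_add_trBminus (i j : 'I_n) : Bplus B i j + Bminus B j i = B i j.
Proof.
rewrite !mxE; case: ltngtP => [ij|ji|/val_inj->]; rewrite ?eqxx ?ltnn //=.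
- by rewrite -(inj_eq val_inj) /= gtn_eqF // addr0.
- by rewrite -(inj_eq val_inj) /= gtn_eqF // add0r.
- by rewrite addrC subrK.
Qed.

Hypotheses (B_ge0 : forall i j, 0 <= B i j) (B_diag_gt0 : forall i, 0 < B i i).

Lemma Bplus_ge0 i j : 0 <= Bplus B i j.
Proof. by rewrite mxE; case: ifP => _; [exact: B_ge0 | case: eqP]. Qed.

Lemma Bminus_ge0 i j : 0 <= Bminus B i j.
Proof.
rewrite mxE; case: ifP => _; first exact: B_ge0.
by case: eqP => // ->; have := B_diag_gt0 j; lia.
Qed.
End TriangularSplitting.

Section Realization.
Variables (K : fieldType) (n : nat) (B : 'M[int]_n.+1).

(* Cartan matrices are indexed by [rev_ord], and the vertex idempotent already
   accounts for the diagonal entry 1 of B_+. *)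
Definition nb_arrowsA (pq : 'I_n.+1 * 'I_n.+1) : nat :=
  (`|Bplus B (rev_ord pq.2) (rev_ord pq.1)| - (pq.1 == pq.2))%N.
Definition nb_arrowsM (pq : 'I_n.+1 * 'I_n.+1) : nat :=
  `|Bminus B (rev_ord pq.2) (rev_ord pq.1)|%N.

Definition arrowA := {pq : 'I_n.+1 * 'I_n.+1 & 'I_(nb_arrowsA pq)}.
Definition arrowM := {pq : 'I_n.+1 * 'I_n.+1 & 'I_(nb_arrowsM pq)}.

Definition realA := rsz_alg K (fun a : arrowA => (tag a).1) (fun a => (tag a).2).
Definition realM := diag_bimod K arrowM.
Definition real_idem : 'I_n.+1 -> realA := videm _ _ _.
Definition real_lact : realA -> realM -> realM := diag_lact (fun b => (tag b).1).
Definition real_ract : realM -> realA -> realM := diag_ract (fun b => (tag b).2).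

Lemma card_arrows (N : 'I_n.+1 * 'I_n.+1 -> nat) p q :
  #|[pred a : {pq & 'I_(N pq)} | ((tag a).1 == p) && ((tag a).2 == q)]| = N (p, q).
Proof.
rewrite -[RHS]card_ord -(card_tag_eq (fun pq => 'I_(N pq))).
by apply: eq_card => a; rewrite !inE -xpair_eqE -surjective_pairing.
Qed.

Lemma vertex_add_nb_arrowsA p q :
  ((p == q) + nb_arrowsA (p, q))%N = `|Bplus B (rev_ord q) (rev_ord p)|%N.
Proof. by rewrite /nb_arrowsA /=; case: eqVneq => [->|_]; rewrite ?Bplus_diag ?subn0. Qed.

Lemma dim_cornerA_real p q :
  \dim (cornerA (real_idem p) (real_idem q)) = `|Bplus B (rev_ord q) (rev_ord p)|%N.
Proof. by rewrite dim_corner_rsz card_arrows vertex_add_nb_arrowsA. Qed.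

Lemma dim_cornerM_real p q :
  \dim (cornerM real_lact real_ract (real_idem p) (real_idem q)) =
  `|Bminus B (rev_ord q) (rev_ord p)|%N.
Proof. by rewrite dim_corner_diag_bimod card_arrows. Qed.

Lemma dim_cornerL_real p q :
  \dim (cornerL real_lact real_ract (real_idem p) (real_idem q)) =
  (`|Bplus B (rev_ord q) (rev_ord p)| + `|Bminus B (rev_ord p) (rev_ord q)|)%N.
Proof. by rewrite dim_corner_trivext !card_arrows vertex_add_nb_arrowsA. Qed.

Lemma real_no_loop (a : arrowA) : (tag a).1 != (tag a).2.
Proof.
case: a => -[p q] /= [k]; rewrite /nb_arrowsA /=.
by case: eqVneq => // ->; rewrite Bplus_diag.
Qed.

Lemma real_idem_complete : complete_prim_orth_idem real_idem.
Proof. exact: videm_complete real_no_loop. Qed.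

Lemma real_triangular :
  triangular_alg real_idem /\ triangular_bimod real_lact real_ract real_idem.
Proof.
split; [split|] => [i j ji | i | i j ji]; apply/eqP.
- by rewrite -dimv_eq0 dim_cornerA_real Bplus_lower ?rev_ord_ltn.
- by rewrite dim_cornerA_real Bplus_diag.
- by rewrite -dimv_eq0 dim_cornerM_real Bminus_lower ?rev_ord_ltn.
Qed.

Hypotheses (B_ge0 : forall i j, 0 <= B i j) (B_diag_gt0 : forall i, 0 < B i i).

Lemma cartanA_real : cartanA real_idem = Bplus B.
Proof.
apply/matrixP => i j; rewrite [LHS]mxE dim_cornerA_real !rev_ordK.
by rewrite abszE ger0_norm // (Bplus_ge0 B_ge0).
Qed.

Lemma cartanM_real : cartanM real_lact real_ract real_idem = Bminus B.
Proof.
apply/matrixP => i j; rewrite [LHS]mxE dim_cornerM_real !rev_ordK.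
by rewrite abszE ger0_norm // (Bminus_ge0 B_ge0 B_diag_gt0).
Qed.

Lemma cartanL_real : cartanL real_lact real_ract real_idem = B.
Proof.
apply/matrixP => i j; rewrite [LHS]mxE dim_cornerL_real !rev_ordK PoszD !abszE.
rewrite !ger0_norm ?Bplus_add_trBminus ?(Bplus_ge0 B_ge0) //.
exact: Bminus_ge0.
Qed.
End Realization.

Theorem corollary2p22 (K : fieldType) (n : nat) (B : 'M[int]_n) :
  (0 < n)%N ->
  (forall i j : 'I_n, 0 <= B i j) ->
  (forall i : 'I_n, 0 < B i i) ->
  exists (A : falgType K) (e : 'I_n -> A) (M : vectType K)
         (la : A -> M -> M) (ra : M -> A -> M),
    [/\ complete_prim_orth_idem e,
        triangular_alg e,
        bimod_ax la ra &
        triangular_bimod la ra e] /\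
    [/\ cartanA e = Bplus B,
        cartanM la ra e = Bminus B &
        cartanL la ra e = B].
Proof.
case: n B => [//|n] B _ B_ge0 B_diag_gt0.
have [triA triM] := real_triangular K B.
exists (realA K B : falgType K), (real_idem K B), (realM K B : vectType K).
exists (@real_lact K n B), (@real_ract K n B).
split; split => //.
- exact: real_idem_complete.
- exact: diag_bimod_ax.
- exact: cartanA_real.
- exact: cartanM_real.
- exact: cartanL_real.
Qed.
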